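(* Let $J\subset\mathbb{Z}$ and $S\subseteq\mathcal{U}$. Run the Simple algorithm with input $J$, where the elements revealed to it are exactly the elements of $S$, in an arbitrary order. Then the algorithm returns an independent set $P\subseteq S$ such that for every $j\in J$, $$\mathrm{rank}(B_P(j))\ \ge\ \mathrm{rank}\big(B_S(J\setminus\{j\})\cup B_S(j)\big)-\mathrm{rank}\big(B_S(J\setminus\{j\})\big).$$
   Context: $M=(\mathcal{U},\mathcal{I})$ is a matroid; $\mathrm{rank}(X)=\max\{|X'|:X'\subseteq X,X'\in\mathcal{I}\}$ and $\mathrm{span}(X)=\{e\in\mathcal{U}:\mathrm{rank}(X\cup\{e\})=\mathrm{rank}(X)\}$. Every element $e$ has a value $\mathrm{val}(e)\ge 0$; standing assumption: elements of rank $0$ have value $0$, and every element of positive value has value $2^i$ for some $i\in\mathbb{Z}$. For $i\in\mathbb{Z}$ and $X\subseteq\mathcal{U}$, $B_X(i)=\{e\in X:\mathrm{val}(e)=2^i\}$ and for $I\subseteq\mathbb{Z}$, $B_X(I)=\bigcup_{i\in I}B_X(i)$. Logarithms are base 2. Simple algorithm with input $J\subset\mathbb{Z}$: start with $P=\emptyset$; immediately after each element $e$ is revealed, if $\mathrm{val}(e)>0$, $\log\mathrm{val}(e)\in J$ and $e\notin\mathrm{span}(P)$, then add $e$ to $P$. Output $P$. *)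

From HB Require Import structures.
From mathcomp Require Import all_boot all_order all_algebra.
From mathcomp Require Import boolp.
Set Implicit Arguments. Unset Strict Implicit. Unset Printing Implicit Defensive.
Import Order.TTheory GRing.Theory Num.Theory.

Record matroid (U : finType) := Matroid {
  indep : {set U} -> bool;
  indep0 : indep set0;
  indep_sub : forall A B : {set U}, A \subset B -> indep B -> indep A;
  indep_exch : forall A B : {set U}, indep A -> indep B -> #|A| < #|B| ->
                 exists2 e, e \in B :\: A & indep (e |: A)
}.

Section Defs.
Variables (U : finType) (M : matroid U).

Definition rank (X : {set U}) : nat :=
  \max_(X' : {set U} | (X' \subset X) && indep M X') #|X'|.

Definition span (X : {set U}) : {set U} :=
  [set e | rank (e |: X) == rank X].

Local Open Scope ring_scope.
Variables (R : realFieldType) (val : U -> R).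

Definition B1 (X : {set U}) (i : int) : {set U} :=
  [set e in X | val e == 2%:R ^ i].

Definition Bset (X : {set U}) (I : int -> Prop) : {set U} :=
  [set e in X | `[< exists i : int, I i /\ val e = 2%:R ^ i >]].

Definition simple_alg (J : {pred int}) (s : seq U) : {set U} :=
  foldl (fun P e =>
           if [&& 0 < val e,
                  `[< exists j : int, j \in J /\ val e = 2%:R ^ j >]
                & e \notin span P]
           then e |: P else P) set0 s.

End Defs.

From Pilot Require Import Defs.
From HB Require Import structures.
From mathcomp Require Import all_boot all_order all_algebra.
From mathcomp Require Import boolp.
Import Order.TTheory GRing.Theory Num.Theory.

(* The Simple algorithm is the greedy algorithm restricted to the eligible
   elements (value 2^i with i in J), so its output P is independent, contained
   in S, and spans every eligible element of S.  Every element of P lies in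
   B_S(J\{j}) or in B_P(j), hence B_S(J\{j}) u B_S(j) lies in the span of
   B_S(J\{j}) u B_P(j); monotonicity of rank under span and subadditivity of
   rank give the bound. *)

(* [Defs.span] is qualified: the bare name denotes the span of vector.v. *)

Section MatroidRank.
Local Set Implicit Arguments.
Local Unset Strict Implicit.
Variables (U : finType) (M : matroid U).
Implicit Types X Y Z B I : {set U}.

Definition basis X B := [&& B \subset X, indep M B & #|B| == rank M X].

Lemma leq_card_rank I X : indep M I -> I \subset X -> #|I| <= rank M X.
Proof.
by move=> iI sIX; apply: (leq_bigmax_cond (F := fun X' => #|X'|)); rewrite sIX.
Qed.

Lemma exists_basis X : exists B : {set U}, basis X B.
Proof.
have nonempty : 0 < #|[pred X' : {set U} | (X' \subset X) && indep M X']|.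
  by apply/card_gt0P; exists set0; rewrite inE sub0set indep0.
have [B] := eq_bigmax_cond (fun X' : {set U} => #|X'|) nonempty.
by rewrite inE => /andP[sBX iB] cB; exists B; rewrite /basis sBX iB /rank cB /=.
Qed.

Lemma subset_leq_rank X Y : X \subset Y -> rank M X <= rank M Y.
Proof.
move=> sXY; have [B /and3P[sBX iB /eqP <-]] := exists_basis X.
exact: leq_card_rank iB (subset_trans sBX sXY).
Qed.

Lemma rank_setU_leq X Y : rank M (X :|: Y) <= rank M X + rank M Y.
Proof.
have [B /and3P[sBXY iB /eqP <-]] := exists_basis (X :|: Y).
have -> : B = (B :&: X) :|: (B :&: Y) by rewrite -setIUr; apply/esym/setIidPl.
apply: leq_trans (leq_card_setU _ _) _.
by apply: leq_add; apply: leq_card_rank; rewrite ?subsetIr //;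
  apply: indep_sub iB; rewrite subsetIl.
Qed.

(* Augmentation, applied until the cardinality reaches [rank M X]. *)
Lemma basis_extend I X : indep M I -> I \subset X ->
  exists2 B : {set U}, I \subset B & basis X B.
Proof.
have [n] := ubnP (rank M X - #|I|); elim: n I => // n IH I ltn iI sIX.
have [K /and3P[sKX iK /eqP cK]] := exists_basis X.
have [leKI | ltIK] := leqP #|K| #|I|.
  by exists I; rewrite // /basis sIX iI eqn_leq leq_card_rank // -cK.
have [e] := indep_exch iI iK ltIK; rewrite inE => /andP[eI eK] ieI.
have seIX : e |: I \subset X by rewrite subUset sub1set (subsetP sKX).
have [|B sIB bB] := IH (e |: I) _ ieI seIX.
  by rewrite cardsU1 eI add1n subnS -ltnS prednK // subn_gt0 -cK.
by exists B => //; apply: subset_trans sIB; apply: subsetUr.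
Qed.

Lemma subset_span X : X \subset Defs.span M X.
Proof. by apply/subsetP => x xX; rewrite inE (setUidPr _) // sub1set. Qed.

Lemma basis_setU1_dep X B f : basis X B -> f \in Defs.span M X -> f \notin B ->
  ~~ indep M (f |: B).
Proof.
move=> /and3P[sBX _ /eqP cB]; rewrite inE => /eqP rfX fB; apply/negP => ifB.
have := leq_card_rank ifB (setUS [set f] sBX).
by rewrite cardsU1 fB rfX -cB ltnn.
Qed.

Lemma basis_setU1_indep X B e : basis X B -> e \notin Defs.span M X ->
  indep M (e |: B) /\ e \notin X.
Proof.
move=> bB espan; have /and3P[sBX iB /eqP cB] := bB.
have [B' sBB' /and3P[sB'eX iB' /eqP cB']] :=
  basis_extend iB (subset_trans sBX (subsetUr [set e] X)).
have ltBB' : #|B| < #|B'|.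
  rewrite cB cB' ltn_neqAle eq_sym; move: espan; rewrite inE => ->.
  by rewrite subset_leq_rank // subsetUr.
have /properP[_ [f fB' fB]] : B \proper B' by rewrite properEcard sBB'.
have ifB : indep M (f |: B) by apply: indep_sub iB'; rewrite subUset sub1set fB'.
have fX : f \notin X.
  apply: contraL ifB => fX.
  exact: basis_setU1_dep bB (subsetP (subset_span X) f fX) fB.
move: (subsetP sB'eX f fB'); rewrite in_setU1 (negbTE fX) orbF => /eqP ef.
by rewrite -ef.
Qed.

Lemma indep_setU1 I e : indep M I -> e \notin Defs.span M I -> indep M (e |: I).
Proof.
move=> iI eI; have bI : basis I I.
  rewrite /basis subxx iI eqn_leq leq_card_rank //=.
  by apply/bigmax_leqP => I' /andP[sI'I _]; apply: subset_leq_card.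
by case: (basis_setU1_indep bI eI).
Qed.

Lemma spanS X Y : X \subset Y -> Defs.span M X \subset Defs.span M Y.
Proof.
move=> sXY; apply/subsetP => e eX; apply/negPn/negP => eY.
have [B bB] := exists_basis X; have /and3P[sBX iB _] := bB.
have [B' sBB' bB'] := basis_extend iB (subset_trans sBX sXY).
have [ieB' eNY] := basis_setU1_indep bB' eY.
have eB : e \notin B by apply: contra eNY => eB; rewrite (subsetP sXY) ?(subsetP sBX).
by have/negP := basis_setU1_dep bB eX eB; apply; apply: indep_sub ieB'; apply: setUS.
Qed.

Lemma rank_leq_span X Z : Z \subset Defs.span M X -> rank M Z <= rank M X.
Proof.
move=> sZX; apply: leq_trans (subset_leq_rank (subsetUr X Z)) _.
rewrite leqNgt; apply/negP => ltXZ.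
have [B bB] := exists_basis X; have /and3P[sBX iB /eqP cB] := bB.
have [B' sBB' /and3P[sB'XZ iB' /eqP cB']] :=
  basis_extend iB (subset_trans sBX (subsetUl X Z)).
have /properP[_ [f fB' fB]] : B \proper B' by rewrite properEcard sBB' cB cB'.
have fspan : f \in Defs.span M X.
  move: (subsetP sB'XZ f fB'); rewrite in_setU.
  by case/orP => [/(subsetP (subset_span X))|/(subsetP sZX)].
have/negP := basis_setU1_dep bB fspan fB; apply.
by apply: indep_sub iB'; rewrite subUset sub1set fB'.
Qed.

End MatroidRank.

Section SimpleAlgorithm.
Local Open Scope ring_scope.
Local Set Implicit Arguments.
Local Unset Strict Implicit.
Variables (U : finType) (M : matroid U) (R : realFieldType) (val : U -> R).
Variable J : {pred int}.
Implicit Types P X Y : {set U}.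

Definition eligible e :=
  (0 < val e) && `[< exists j : int, j \in J /\ val e = 2%:R ^ j >].

Definition simple_step P e :=
  if eligible e && (e \notin Defs.span M P) then e |: P else P.

Lemma simple_algE s : simple_alg M val J s = foldl simple_step set0 s.
Proof. by rewrite /simple_alg; elim: s set0 => //= e s IH P; rewrite andbA IH. Qed.

Lemma simple_step_indep P s : indep M P -> indep M (foldl simple_step P s).
Proof.
elim: s P => //= e s IH P iP; apply: IH; rewrite /simple_step.
by case: ifP => // /andP[_]; apply: indep_setU1.
Qed.

Lemma simple_step_grows P s : P \subset foldl simple_step P s.
Proof.
elim: s P => //= e s IH P; apply: subset_trans (IH _).
by rewrite /simple_step; case: ifP => _; rewrite ?subsetUr.
Qed.

Lemma simple_step_sub P s :
  foldl simple_step P s \subset P :|: [set e | (e \in s) && eligible e].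
Proof.
elim: s P => /= [|e s IH] P; first exact: subsetUl.
apply: subset_trans (IH _) _; rewrite subUset andbC; apply/andP; split.
  apply: subset_trans (subsetUr P _); apply/subsetP => x.
  by rewrite !inE => /andP[-> ->]; rewrite orbT.
rewrite /simple_step; case: ifP => [/andP[ee _]|_]; last exact: subsetUl.
by rewrite subUset subsetUl andbT sub1set !inE eqxx ee orbT.
Qed.

Lemma simple_step_span P s e :
  e \in s -> eligible e -> e \in Defs.span M (foldl simple_step P s).
Proof.
elim: s P => //= x s IH P; rewrite in_cons => /orP[/eqP-> ee|es ee]; last exact: IH.
apply: (subsetP (spanS M (simple_step_grows _ s))).
rewrite /simple_step ee /=; case: ifPn => [_|/negPn //].
exact: (subsetP (subset_span M _)) (setU11 _ _).
Qed.

Lemma eligible_Bset X (I : int -> Prop) e :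
  (forall i, I i -> i \in J) -> e \in Bset val X I -> eligible e.
Proof.
move=> IJ; rewrite inE => /andP[_ /asboolP[i [Ii ve]]].
rewrite /eligible ve exprz_gt0 ?ltr0n //=.
by apply/asboolP; exists i; split => //; apply: IJ.
Qed.

Lemma eligible_B1 X j e : j \in J -> e \in B1 val X j -> eligible e.
Proof.
move=> jJ; rewrite inE => /andP[_ /eqP ve].
by rewrite /eligible ve exprz_gt0 ?ltr0n //=; apply/asboolP; exists j.
Qed.

Lemma eligible_split X Y j e : e \in X -> e \in Y -> eligible e ->
  e \in Bset val X (fun i => i \in J /\ i != j) :|: B1 val Y j.
Proof.
move=> eX eY /andP[_ /asboolP[i [iJ ve]]]; rewrite !inE eX eY ve /=.
have [-> | nij] := eqVneq i j; first by rewrite eqxx orbT.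
by apply/orP; left; apply/asboolP; exists i.
Qed.

End SimpleAlgorithm.

Local Open Scope ring_scope.

Theorem lemma1 (U : finType) (M : matroid U) (R : realFieldType) (val : U -> R)
  (val_ge0 : forall e, 0 <= val e)
  (val_rank0 : forall e, rank M [set e] = 0%N -> val e = 0)
  (val_pow2 : forall e, 0 < val e -> exists i : int, val e = 2%:R ^ i)
  (J : {pred int}) (S : {set U}) (s : seq U) (Hs : perm_eq s (enum S)) :
  let P := simple_alg M val J s in
  [/\ indep M P, P \subset S &
      forall j : int, j \in J ->
        (rank M (Bset val S (fun i => i \in J /\ i != j) :|: B1 val S j))%:Z
          - (rank M (Bset val S (fun i => i \in J /\ i != j)))%:Z
        <= (rank M (B1 val P j))%:Z].
Proof.
move=> P; have memS x : (x \in s) = (x \in S) by rewrite (perm_mem Hs) mem_enum.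
have sPS : P \subset [set e | (e \in S) && eligible val J e].
  rewrite /P simple_algE; apply: subset_trans (simple_step_sub _ _ _ _ _) _.
  by rewrite set0U; apply/subsetP => x; rewrite !inE memS.
split.
- by rewrite /P simple_algE; apply: simple_step_indep; apply: indep0.
- by apply: subset_trans sPS _; apply/subsetP => x; rewrite inE => /andP[].
move=> j jJ; set A := Bset val S _.
have sPA : P \subset A :|: B1 val P j.
  apply/subsetP => x xP; move: (subsetP sPS x xP); rewrite inE => /andP[xS ex].
  exact: eligible_split.
have spanAB : A :|: B1 val S j \subset Defs.span M (A :|: B1 val P j).
  apply/subsetP => e eAB; apply: (subsetP (spanS M sPA)).
  have ee : eligible val J e.
    by case/setUP: eAB; [apply: eligible_Bset => i []|apply: eligible_B1].
  have eS : e \in S by case/setUP: eAB; rewrite inE => /andP[].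
  by rewrite /P simple_algE; apply: simple_step_span; rewrite ?memS.
rewrite lerBlDr -PoszD lez_nat addnC.
exact: leq_trans (rank_leq_span spanAB) (rank_setU_leq _ _ _).
Qed.
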